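(* With the convention $g_1(0)=h_1(0)=0$, $$\sum_{M\geq1}(g_1(M)-g_1(M-1))x^M=\frac{x^2-x^3}{(1-x-x^2)^2}=\sum_{M\geq1}(h_1(M)-h_1(M-1))x^M,$$ and $$\sum_{M\geq1}(g(M)-h(M))x^M=\frac{x^2-x^3}{(1-x-x^2)^2}.$$
   Context: The perimeter of a nonempty partition $\lambda$ with largest part $\lambda_1$ and $\ell(\lambda)$ parts is $\lambda_1+\ell(\lambda)-1$. $\mathcal G(M)$ is the set of partitions into odd parts with perimeter $M$, $\mathcal H(M)$ the set of partitions into distinct parts with perimeter $M$; $g(M)$ (resp. $h(M)$) is the total number of parts, summed over all partitions in $\mathcal G(M)$ (resp. $\mathcal H(M)$). $\mathcal G_1(M)$ is the set of partitions with perimeter $M$ in which exactly one distinct even integer occurs as a part (possibly with multiplicity greater than one) and all other parts are odd; $\mathcal H_1(M)$ is the set of partitions with perimeter $M$ in which exactly one part value occurs at least twice and every other part value occurs exactly once. $g_1(M)=|\mathcal G_1(M)|$, $h_1(M)=|\mathcal H_1(M)|$. *)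

From mathcomp Require Import all_boot all_order all_algebra.
Set Implicit Arguments. Unset Strict Implicit. Unset Printing Implicit Defensive.
Import GRing.Theory.

Definition is_partition (s : seq nat) : bool :=
  sorted geq s && all (fun x => 0 < x) s.

Definition perimeter (s : seq nat) : nat := head 0 s + size s - 1.

Fixpoint seqs_upto (m l : nat) : seq (seq nat) :=
  match l with
  | 0 => [:: [::]]
  | l'.+1 => [::] :: [seq x :: s | x <- iota 1 m, s <- seqs_upto m l']
  end.

(* The (finite) list of all nonempty partitions with perimeter M satisfying P.
   A nonempty partition of perimeter M has largest part <= M and at most M parts,
   so it appears in seqs_upto M M. *)
Definition parts_perim (P : seq nat -> bool) (M : nat) : seq (seq nat) :=
  [seq s <- undup (seqs_upto M M) |
     is_partition s && (s != [::]) && (perimeter s == M) && P s].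

Definition odd_parts (s : seq nat) : bool := all odd s.
Definition distinct_parts (s : seq nat) : bool := uniq s.
Definition one_even_value (s : seq nat) : bool :=
  size (undup [seq x <- s | ~~ odd x]) == 1.
Definition one_repeated_value (s : seq nat) : bool :=
  size [seq x <- undup s | 1 < count_mem x s] == 1.

Definition g (M : nat) : nat := sumn [seq size s | s <- parts_perim odd_parts M].
Definition h (M : nat) : nat := sumn [seq size s | s <- parts_perim distinct_parts M].
Definition g1 (M : nat) : nat := size (parts_perim one_even_value M).
Definition h1 (M : nat) : nat := size (parts_perim one_repeated_value M).

(* [gf_eq a P Q]: the formal power series sum_n a n x^n equals P(x)/Q(x),
   stated as the coefficientwise identity (sum_n a n x^n) * Q(x) = P(x)
   (Q has constant term 1, so it is invertible in Z[[x]]). *)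
Definition gf_eq (a : nat -> int) (P Q : {poly int}) : Prop :=
  forall n : nat, (\sum_(k < n.+1) a k * Q`_(n - k) = P`_n)%R.

Definition diff_seq (f : nat -> nat) (M : nat) : int :=
  if M is 0 then 0%R else ((f M)%:Z - (f M.-1)%:Z)%R.

From mathcomp Require Import all_boot all_order all_algebra.
From mathcomp Require Import zify ring.
Set Implicit Arguments. Unset Strict Implicit. Unset Printing Implicit Defensive.
Import GRing.Theory.

(* Increasing or repeating the largest part of the partitions of perimeter M produces every
   partition of perimeter M+1 exactly once.  For each statistic of the theorem we track a short
   vector of class counts (for g: partitions into odd parts, those whose parts are odd except
   an even largest one, and their numbers of parts) on which these two moves act linearly, so
   the statistic is a linear form in the iterates of an explicit integer matrix.  Its
   characteristic polynomial divides (x - 1) (x^2 - x - 1)^2, which gives the recurrence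
   encoded by the denominator (after differencing for g1 and h1); the first terms give the
   numerator.  For g1 and h1 the matrices and initial vectors even coincide. *)

Definition incr_head (s : seq nat) : seq nat := if s is x :: r then x.+1 :: r else [::].
Definition dup_head (s : seq nat) : seq nat := if s is x :: r then x :: x :: r else [::].

Fixpoint perim_parts (M : nat) : seq (seq nat) :=
  match M with
  | 0 => [::]
  | 1 => [:: [:: 1]]
  | M'.+1 => map incr_head (perim_parts M') ++ map dup_head (perim_parts M')
  end.

Lemma perim_partsS M :
  0 < M -> perim_parts M.+1 = map incr_head (perim_parts M) ++ map dup_head (perim_parts M).
Proof. by case: M. Qed.

Lemma is_partition_cons x r :
  is_partition (x :: r) = [&& 0 < x, head 0 r <= x & is_partition r].
Proof.
rewrite /is_partition; case: r => [|y r] /=; first by rewrite andbT.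
by case: (0 < x); case: (y <= x); rewrite /= ?andbF.
Qed.

Lemma perimeter_cons x r : perimeter (x :: r) = x + size r.
Proof. by rewrite /perimeter /= addnS subn1. Qed.

Lemma partition_head_ub x r : is_partition (x :: r) -> all (fun y => y <= x) r.
Proof.
case/andP=> /= sorted_xr _; apply: order_path_min sorted_xr => y z t /=.
by move=> /[swap]; apply: leq_trans.
Qed.

Lemma partition_mem_head x r : is_partition (x :: r) -> (x \in r) = (x == head 0 r).
Proof.
rewrite is_partition_cons; case: r => [|y r] //=; first by case: x.
case/and3P=> _ le_yx part_yr; rewrite in_cons.
have [//|ne_xy /=] := eqVneq x y; apply/negbTE/negP => /(allP (partition_head_ub part_yr)).
by lia.
Qed.

Lemma partition_incr_head_neq x r : is_partition (x :: r) -> (x.+1 == head 0 r) = false.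
Proof. by rewrite is_partition_cons => /and3P[_ ? _]; lia. Qed.

Lemma partition_incr_head_notin x r : is_partition (x :: r) -> (x.+1 \in r) = false.
Proof. by move/partition_head_ub/allP=> ub_r; apply/negP=> /ub_r; lia. Qed.

Lemma mem_perim_parts M s :
  (s \in perim_parts M) = [&& is_partition s, s != [::] & perimeter s == M].
Proof.
elim: M s => [|M IH] s.
  case: s => [|x r]; first by rewrite eqxx andbF.
  by rewrite perimeter_cons is_partition_cons; case: x => //= x; rewrite andbF.
have [->|M_gt0] := posnP M.
  case: s => [|x [|y r]]; rewrite ?eqxx ?andbF //= in_cons in_nil orbF eqseq_cons.
    by rewrite /is_partition /perimeter /= eqxx andbT addn1 subn1; case: x.
  rewrite [y :: r == _](_ : _ = false) // andbF.
  apply/esym/negbTE; rewrite perimeter_cons is_partition_cons /=.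
  by apply/negP => /andP[/and3P[? _ _]]; lia.
rewrite perim_partsS // mem_cat.
apply/orP/idP => [[]|].
- case/mapP=> -[|y t]; rewrite IH ?eqxx ?andbF // is_partition_cons perimeter_cons.
  case/andP=> /and3P[y_gt0 le_ty part_t] /eqP perim_t ->.
  rewrite is_partition_cons part_t perimeter_cons /=; lia.
- case/mapP=> -[|y t]; rewrite IH ?eqxx ?andbF // is_partition_cons perimeter_cons.
  case/andP=> /and3P[y_gt0 le_ty part_t] /eqP perim_t ->.
  rewrite !is_partition_cons part_t perimeter_cons /=; lia.
case: s => [|x r]; rewrite ?eqxx ?andbF // is_partition_cons perimeter_cons /=.
case/andP=> /and3P[x_gt0 le_rx part_r] /eqP size_r.
case: r le_rx part_r size_r => [|y r] /= le_yx part_r size_r.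
  left; apply/mapP; exists [:: x.-1]; last by rewrite /= prednK.
  by rewrite IH perimeter_cons /is_partition /=; lia.
have [lt_yx|eq_yx] : y < x \/ y = x by lia.
  left; apply/mapP; exists (x.-1 :: y :: r); last by rewrite /= prednK.
  rewrite IH is_partition_cons part_r perimeter_cons /=.
  by move: part_r; rewrite is_partition_cons; lia.
right; apply/mapP; exists (y :: r); last by rewrite eq_yx.
by rewrite IH part_r perimeter_cons /=; lia.
Qed.

Lemma perim_parts_cons M s :
  s \in perim_parts M -> exists x r, s = x :: r /\ is_partition (x :: r).
Proof. by rewrite mem_perim_parts; case: s => [|x r] // /and3P[part_s _ _]; exists x, r. Qed.

Lemma uniq_perim_parts M : uniq (perim_parts M).
Proof.
elim: M => [|M IH] //; have [->//|M_gt0] := posnP M.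
rewrite perim_partsS // cat_uniq !map_inj_in_uniq //.
- apply/and3P; split=> //; apply/hasPn => _ /mapP[_ /perim_parts_cons[y [u [-> _]]] ->].
  apply/mapP => -[_ /perim_parts_cons[z [v [-> part_zv]]] [-> eq_v]].
  by move: part_zv; rewrite -eq_v is_partition_cons /= => /and3P[_ ? _]; lia.
- by move=> _ _ /perim_parts_cons[y [u [-> _]]] /perim_parts_cons[z [v [-> _]]] [-> _ ->].
- by move=> _ _ /perim_parts_cons[y [u [-> _]]] /perim_parts_cons[z [v [-> _]]] [-> ->].
Qed.

Lemma mem_seqs_upto m l s :
  all (fun x => 0 < x <= m) s -> size s <= l -> s \in seqs_upto m l.
Proof.
elim: l s => [|l IH] [|x s] //=; rewrite ?in_cons ?eqxx //.
case/andP=> x_in s_in size_s; apply/allpairsP; exists (x, s) => /=.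
by rewrite mem_iota IH //; split=> //; lia.
Qed.

Lemma perm_parts_perim P M : perm_eq (parts_perim P M) (filter P (perim_parts M)).
Proof.
apply: uniq_perm; rewrite ?filter_uniq ?undup_uniq ?uniq_perim_parts // => s.
rewrite !mem_filter mem_perim_parts mem_undup.
case: s => [|x r]; first by rewrite !andbF.
have [part_xr|] := boolP (is_partition (x :: r)); last by rewrite !andbF.
have [/eqP perim_xr|] := boolP (perimeter (x :: r) == M); last by rewrite !andbF.
rewrite andbT; case: (P _); rewrite ?andbF ?andbT //; apply: mem_seqs_upto.
  have /allP ub_r := partition_head_ub part_xr.
  move: part_xr perim_xr; rewrite /is_partition perimeter_cons /= => /andP[_ /andP[x_gt0 r_gt0]] <-.
  apply/andP; split; first lia.
  by apply/allP=> y y_r; have := allP r_gt0 y y_r; have := ub_r y y_r; lia.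
by move: part_xr perim_xr; rewrite is_partition_cons perimeter_cons /= => /and3P[? _ _] <-; lia.
Qed.

Local Open Scope ring_scope.

Lemma pairD (U V : nmodType) (a c : U) (b d : V) : (a, b) + (c, d) = (a + c, b + d).
Proof. by []. Qed.

Definition perim_sum (V : nmodType) (f : seq nat -> V) (M : nat) : V :=
  \sum_(s <- perim_parts M) f s.

Lemma perim_sum_morph (V W : nmodType) (phi : V -> W) (f : seq nat -> V) M :
  phi 0 = 0 -> {morph phi : u v / u + v} -> perim_sum (phi \o f) M = phi (perim_sum f M).
Proof. by move=> phi0 phiD; rewrite /perim_sum (big_morph phi phiD phi0). Qed.

Section Transfer.

Variables (V : nmodType) (f : seq nat -> V) (step : V -> V).
Hypothesis step0 : step 0 = 0.
Hypothesis stepD : {morph step : u v / u + v}.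
Hypothesis f_step : forall x r, is_partition (x :: r) ->
  f (incr_head (x :: r)) + f (dup_head (x :: r)) = step (f (x :: r)).

Lemma perim_sum_iter M : perim_sum f M.+1 = iter M step (f [:: 1]).
Proof.
elim: M => [|M IH]; first by rewrite /perim_sum big_seq1.
have stepE : {in perim_parts M.+1, forall s, step (f s) = f (incr_head s) + f (dup_head s)}.
  by move=> _ /perim_parts_cons[x [r [-> /f_step ->]]].
rewrite iterS -IH /perim_sum (big_morph step stepD step0) (eq_big_seq _ stepE) big_split.
rewrite -(big_map incr_head xpredT f) -(big_map dup_head xpredT f) -big_cat -perim_partsS //.
Qed.

End Transfer.

Lemma sumn_parts_perim P (w : seq nat -> nat) M :
  (sumn [seq w s | s <- parts_perim P M])%:Z = perim_sum (fun s => (P s * w s)%N%:Z) M.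
Proof.
rewrite (perm_sumn (perm_map _ (perm_parts_perim P M))) sumnE big_map big_filter.
rewrite (big_morph Posz PoszD erefl) /perim_sum big_mkcond; apply: eq_bigr => s _.
by case: (P s); rewrite ?mul1n.
Qed.

Lemma size_parts_perim P M :
  (size (parts_perim P M))%:Z = perim_sum (fun s => (P s : nat)%:Z) M.
Proof.
rewrite (perm_size (perm_parts_perim P M)) size_filter -sum1_count.
rewrite (big_morph Posz PoszD erefl) /perim_sum big_mkcond; apply: eq_bigr => s _.
by case: (P s).
Qed.

Definition odd_class (s : seq nat) : int * int * int * int :=
  let o := all odd s in
  let e := all odd (behead s) && ~~ odd (head 0 s) in
  ((o : nat)%:Z, (e : nat)%:Z, (o * size s)%N%:Z, (e * size s)%N%:Z).

Definition odd_step (v : int * int * int * int) : int * int * int * int :=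
  let: (o, e, so, se) := v in (o + e, o, so + se + o, so).

Lemma odd_stepD : {morph odd_step : u v / u + v}.
Proof. by move=> [[[? ?] ?] ?] [[[? ?] ?] ?]; rewrite !pairD /=; congr (_, _, _, _); lia. Qed.

Lemma odd_class_step x r :
  odd_class (incr_head (x :: r)) + odd_class (dup_head (x :: r)) = odd_step (odd_class (x :: r)).
Proof.
rewrite /odd_class /= !pairD /=; case: (odd x); case: (all odd r) => /=; congr (_, _, _, _); lia.
Qed.

Definition distinct_class (s : seq nat) : int * int * int * int :=
  let a := uniq s in
  let b := uniq (behead s) && (head 0 s == head 0 (behead s)) in
  ((a : nat)%:Z, (b : nat)%:Z, (a * size s)%N%:Z, (b * size s)%N%:Z).

Definition distinct_step (v : int * int * int * int) : int * int * int * int :=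
  let: (a, b, sa, sb) := v in (a + b, a, sa + sb, sa + a).

Lemma distinct_stepD : {morph distinct_step : u v / u + v}.
Proof. by move=> [[[? ?] ?] ?] [[[? ?] ?] ?]; rewrite !pairD /=; congr (_, _, _, _); lia. Qed.

Lemma distinct_class_step x r : is_partition (x :: r) ->
  distinct_class (incr_head (x :: r)) + distinct_class (dup_head (x :: r))
  = distinct_step (distinct_class (x :: r)).
Proof.
move=> part_xr; rewrite /distinct_class /= !pairD /= mem_head /=.
rewrite (partition_incr_head_notin part_xr) (partition_incr_head_neq part_xr).
rewrite (partition_mem_head part_xr) eqxx.
by case: (uniq r); case: (x == head 0 r) => /=; congr (_, _, _, _); lia.
Qed.

(* For [x :: r], [even_class] uses [n] = number of distinct even parts in [r], [p = odd x] and
   [q = (x == head 0 r)]; [repeat_class] uses [n] = number of values repeated in [r],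
   [p = (x != head 0 r)] and [q] = whether [head 0 r] is repeated.  A partition with [n >= 2]
   never regains the property, and [~~ p && q] forces [n > 0], so five counters suffice. *)
Definition one_value_class (n : nat) (p q : bool) : int * int * int * int * int :=
  (((n == 0) && p : nat)%:Z, ((n == 0) && ~~ p : nat)%:Z, ((n == 1) && p : nat)%:Z,
   ([&& n == 1, ~~ p & ~~ q] : nat)%:Z, ([&& n == 1, ~~ p & q] : nat)%:Z).

Definition one_value_step (v : int * int * int * int * int) : int * int * int * int * int :=
  let: (a, b, c, d, e) := v in (a + b, a, c + d + e, c, b + e).

Definition one_value_total (v : int * int * int * int * int) : int :=
  let: (_, b, c, _, e) := v in b + c + e.

Lemma one_value_stepD : {morph one_value_step : u v / u + v}.
Proof.
by move=> [[[[? ?] ?] ?] ?] [[[[? ?] ?] ?] ?]; rewrite !pairD /=; congr (_, _, _, _, _); lia.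
Qed.

Lemma one_value_totalD : {morph one_value_total : u v / u + v}.
Proof. by move=> [[[[? ?] ?] ?] ?] [[[[? ?] ?] ?] ?]; rewrite !pairD /=; lia. Qed.

Section OneValueClass.

Variables (n : nat) (p q : bool).
Hypothesis reachable : ~~ p && q -> (0 < n)%N.

Lemma one_value_total_class :
  one_value_total (one_value_class n p q) = ((n + (~~ p && ~~ q) == 1)%N : nat)%:Z.
Proof. by move: reachable; case: n => [|[|m]]; case: p; case: q => // /(_ isT). Qed.

Lemma one_value_class_step_flip :
  one_value_class n (~~ p) false + one_value_class (n + (~~ p && ~~ q)) p true
  = one_value_step (one_value_class n p q).
Proof.
by move: reachable; case: n => [|[|m]]; case: p; case: q; rewrite ?addn0 ?addn1 // => /(_ isT).
Qed.

Lemma one_value_class_step_reset :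
  one_value_class n true q + one_value_class (n + (~~ p && ~~ q)) false (~~ p)
  = one_value_step (one_value_class n p q).
Proof.
by move: reachable; case: n => [|[|m]]; case: p; case: q; rewrite ?addn0 ?addn1 // => /(_ isT).
Qed.

End OneValueClass.

Definition even_values (s : seq nat) : seq nat := undup [seq y <- s | ~~ odd y].

Lemma size_even_values_cons x r : is_partition (x :: r) ->
  size (even_values (x :: r)) = (size (even_values r) + (~~ odd x && (x != head 0 r)))%N.
Proof.
rewrite /even_values /= => /partition_mem_head mem_x.
case odd_x: (odd x) => /=; first by rewrite addn0.
by rewrite mem_filter odd_x mem_x; case: (x == head 0 r); rewrite /= ?addn0 ?addn1.
Qed.

Lemma even_values_head x r : is_partition (x :: r) -> ~~ odd x -> x == head 0 r ->
  (0 < size (even_values r))%N.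
Proof.
move=> /partition_mem_head mem_x even_x /eqP x_head.
have : x \in even_values r by rewrite mem_undup mem_filter even_x mem_x x_head eqxx.
by case: (even_values r).
Qed.

Definition even_class (s : seq nat) : int * int * int * int * int :=
  if s is x :: r then one_value_class (size (even_values r)) (odd x) (x == head 0 r) else 0.

Lemma even_class_step x r : is_partition (x :: r) ->
  even_class (incr_head (x :: r)) + even_class (dup_head (x :: r))
  = one_value_step (even_class (x :: r)).
Proof.
move=> part_xr; rewrite [LHS]/= (partition_incr_head_neq part_xr) eqxx.
rewrite size_even_values_cons //; apply: one_value_class_step_flip.
by case/andP; apply: even_values_head.
Qed.

Lemma one_even_value_class s : s != [::] -> is_partition s ->
  (one_even_value s : nat)%:Z = one_value_total (even_class s).
Proof.
case: s => [|x r] // _ part_xr; rewrite /even_class one_value_total_class.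
  by rewrite -size_even_values_cons.
by case/andP; apply: even_values_head.
Qed.

Definition repeated_values (s : seq nat) : seq nat :=
  [seq y <- undup s | (1 < count_mem y s)%N].

Lemma size_repeated_values_cons x r :
  size (repeated_values (x :: r)) = (size (repeated_values r) + (count_mem x r == 1))%N.
Proof.
rewrite /repeated_values !size_filter /=.
have countE y : y != x -> (1 < (x == y) + count_mem y r)%N = (1 < count_mem y r)%N.
  by rewrite eq_sym => /negbTE ->.
have [x_r|x_notin_r] := boolP (x \in r).
  have x_undup : x \in undup r by rewrite mem_undup.
  have remE (a : pred nat) : count a (undup r) = (a x + count a (rem x (undup r)))%N.
    by rewrite (permP (perm_to_rem x_undup)).
  rewrite !remE /= eqxx add1n ltnS.
  rewrite (@eq_in_count _ _ (fun y => 1 < count_mem y r)%N (rem x (undup r))) => [|y]; last first.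
    by rewrite mem_rem_uniq ?undup_uniq // => /andP[/= /countE].
  have : (0 < count_mem x r)%N by rewrite -has_count has_pred1.
  by case: (count_mem x r) => [|[|c]] //= _; rewrite ?add0n ?addn1 ?addn0.
rewrite /= eqxx (count_memPn x_notin_r) /= addn0; apply: eq_in_count => y y_r.
by apply: countE; apply: contraNneq x_notin_r => <-; rewrite -mem_undup.
Qed.

Lemma partition_count_head x r : is_partition (x :: r) ->
  (count_mem x r == 1) = (x == head 0 r) && (head 0 r != head 0 (behead r)).
Proof.
move=> part_xr; have := partition_mem_head part_xr.
case: r part_xr => [|y t] part_xr /=; first by rewrite andbF.
have [eq_xy _|_ mem_x] := eqVneq x y.
  subst y; have part_xt : is_partition (x :: t).
    by move: part_xr; rewrite is_partition_cons => /and3P[_ _ ->].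
  by rewrite add1n eqSS eqn0Ngt -has_count has_pred1 (partition_mem_head part_xt).
rewrite add0n (count_memPn _) //.
by apply: contraFN mem_x => x_t; rewrite in_cons x_t orbT.
Qed.

Lemma repeated_values_head x r : is_partition (x :: r) ->
  x == head 0 r -> head 0 r == head 0 (behead r) -> (0 < size (repeated_values r))%N.
Proof.
case: r => [|y [|z t]]; rewrite !is_partition_cons /=; [by case: x| |].
  by case/and4P=> _ _ y_gt0 _ _ /eqP y0; rewrite y0 in y_gt0.
move=> _ _ /eqP<-; have : y \in repeated_values [:: y, y & t].
  by rewrite mem_filter mem_undup mem_head /= eqxx.
by case: repeated_values.
Qed.

Definition repeat_class (s : seq nat) : int * int * int * int * int :=
  if s is x :: r then
    one_value_class (size (repeated_values r)) (x != head 0 r) (head 0 r == head 0 (behead r))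
  else 0.

Lemma repeat_class_step x r : is_partition (x :: r) ->
  repeat_class (incr_head (x :: r)) + repeat_class (dup_head (x :: r))
  = one_value_step (repeat_class (x :: r)).
Proof.
move=> part_xr; rewrite [LHS]/= (partition_incr_head_neq part_xr) eqxx -[~~ false]/true.
rewrite -[~~ true]/false size_repeated_values_cons (partition_count_head part_xr).
rewrite -[x == head 0 r]negbK; apply: one_value_class_step_reset; rewrite negbK => /andP[].
exact: repeated_values_head.
Qed.

Lemma one_repeated_value_class s : s != [::] -> is_partition s ->
  (one_repeated_value s : nat)%:Z = one_value_total (repeat_class s).
Proof.
case: s => [|x r] // _ part_xr; rewrite /repeat_class one_value_total_class.
  by rewrite negbK -(partition_count_head part_xr) -size_repeated_values_cons.
by rewrite negbK => /andP[]; apply: repeated_values_head.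
Qed.

Lemma g_iter M : (g M.+1)%:Z = (iter M odd_step (1, 0, 1, 0)).1.2.
Proof.
have odd_stepE x r : is_partition (x :: r) -> _ := fun=> odd_class_step x r.
rewrite /g sumn_parts_perim -(perim_sum_iter erefl odd_stepD odd_stepE).
by rewrite -(@perim_sum_morph _ _ (fun v : int * int * int * int => v.1.2)).
Qed.

Lemma h_iter M : (h M.+1)%:Z = (iter M distinct_step (1, 0, 1, 0)).1.2.
Proof.
rewrite /h sumn_parts_perim -(perim_sum_iter erefl distinct_stepD distinct_class_step).
by rewrite -(@perim_sum_morph _ _ (fun v : int * int * int * int => v.1.2)).
Qed.

Lemma perim_sum_one_value_total (P : seq nat -> bool) cls M :
  (forall s, s != [::] -> is_partition s -> (P s : nat)%:Z = one_value_total (cls s)) ->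
  (size (parts_perim P M))%:Z = one_value_total (perim_sum cls M).
Proof.
move=> clsE; rewrite size_parts_perim -perim_sum_morph //; last exact: one_value_totalD.
by apply: eq_big_seq => s; rewrite mem_perim_parts => /and3P[part_s s_nil _]; apply: clsE.
Qed.

Lemma g1_iter M : (g1 M.+1)%:Z = one_value_total (iter M one_value_step (1, 0, 0, 0, 0)).
Proof.
rewrite /g1 (perim_sum_one_value_total _ one_even_value_class).
by rewrite (perim_sum_iter erefl one_value_stepD even_class_step).
Qed.

Lemma h1_iter M : (h1 M.+1)%:Z = one_value_total (iter M one_value_step (1, 0, 0, 0, 0)).
Proof.
rewrite /h1 (perim_sum_one_value_total _ one_repeated_value_class).
by rewrite (perim_sum_iter erefl one_value_stepD repeat_class_step).
Qed.

Definition den_rec (a : nat -> int) : Prop :=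
  forall n, a n.+4 = 2 * a n.+3 + a n.+2 - 2 * a n.+1 - a n.

Lemma coef_den j : ((1 - 'X - 'X^2) ^+ 2 : {poly int})`_j =
  match j with 0 => 1 | 1 => -2 | 2 => -1 | 3 => 2 | 4 => 1 | _ => 0 end.
Proof.
have -> : (1 - 'X - 'X^2) ^+ 2 = 1 - 'X *+ 2 - 'X^2 + 'X^3 *+ 2 + 'X^4 :> {poly int} by ring.
rewrite !(coefD, coefN, coefMn, coefXn, coefX, coef1).
by case: j => [|[|[|[|[|j]]]]].
Qed.

Lemma gf_eq_den_rec (a : nat -> int) :
  a 0 = 0 -> a 1 = 0 -> a 2 = 1 -> a 3 = 1 -> den_rec a ->
  gf_eq a ('X^2 - 'X^3) ((1 - 'X - 'X^2) ^+ 2).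
Proof.
move=> a0 a1 a2 a3 rec_a n; rewrite coefB !coefXn.
under eq_bigr do rewrite coef_den.
case: n => [|[|[|[|n]]]]; try by rewrite !big_ord_recr big_ord0 /= ?a0 ?a1 ?a2 ?a3; lia.
rewrite !big_ord_recr /= big1 => [|i _]; last first.
  have : (4 < n.+4 - i)%N by have := ltn_ord i; lia.
  by case: (n.+4 - i)%N => [|[|[|[|[|?]]]]] //; rewrite mulr0.
have -> : (n.+4 - n = 4)%N by lia.
have -> : (n.+4 - n.+1 = 3)%N by lia.
have -> : (n.+4 - n.+2 = 2)%N by lia.
have -> : (n.+4 - n.+3 = 1)%N by lia.
rewrite subnn /= rec_a; lia.
Qed.

Lemma odd_step_rec v : den_rec (fun k => (iter k odd_step v).1.2).
Proof. by move=> n; rewrite !iterS; case: (iter n odd_step v) => [[[? ?] ?] ?] /=; lia. Qed.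

Lemma distinct_step_rec v : den_rec (fun k => (iter k distinct_step v).1.2).
Proof. by move=> n; rewrite !iterS; case: (iter n distinct_step v) => [[[? ?] ?] ?] /=; lia. Qed.

Lemma one_value_step_rec v : den_rec (fun k =>
  one_value_total (iter k.+1 one_value_step v) - one_value_total (iter k one_value_step v)).
Proof.
by move=> n; rewrite !iterS; case: (iter n one_value_step v) => [[[[? ?] ?] ?] ?] /=; lia.
Qed.

Lemma gf_eq_diff_one_value (f : nat -> nat) : f 0 = 0%N ->
  (forall M, (f M.+1)%:Z = one_value_total (iter M one_value_step (1, 0, 0, 0, 0))) ->
  gf_eq (diff_seq f) ('X^2 - 'X^3) ((1 - 'X - 'X^2) ^+ 2).
Proof.
move=> f0 fE; apply: gf_eq_den_rec; rewrite /diff_seq /= ?f0 ?fE //.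
case=> [|[|n]]; rewrite /diff_seq /= ?f0 !fE //.
exact: one_value_step_rec.
Qed.

Lemma gf_eq_g_sub_h :
  gf_eq (fun M => if M is 0 then 0 else (g M)%:Z - (h M)%:Z) ('X^2 - 'X^3) ((1 - 'X - 'X^2) ^+ 2).
Proof.
apply: gf_eq_den_rec; rewrite /= ?g_iter ?h_iter //.
case=> [|n]; rewrite /= !g_iter !h_iter //.
by have := odd_step_rec (1, 0, 1, 0) n; have := distinct_step_rec (1, 0, 1, 0) n; lia.
Qed.

Theorem mainTheorem4 :
  let num : {poly int} := ('X^2 - 'X^3)%R in
  let den : {poly int} := ((1 - 'X - 'X^2) ^+ 2)%R in
  g1 0 = 0%N /\ h1 0 = 0%N /\
  gf_eq (diff_seq g1) num den /\
  gf_eq (diff_seq h1) num den /\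
  gf_eq (fun M => if M is 0 then 0%R else ((g M)%:Z - (h M)%:Z)%R) num den.
Proof.
have g1_0 : g1 0 = 0%N by rewrite /g1 (perm_size (perm_parts_perim _ 0)).
have h1_0 : h1 0 = 0%N by rewrite /h1 (perm_size (perm_parts_perim _ 0)).
split=> //; split=> //; split; first exact: gf_eq_diff_one_value g1_0 g1_iter.
by split; [exact: gf_eq_diff_one_value h1_0 h1_iter | exact: gf_eq_g_sub_h].
Qed.
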